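(* Let $\alpha>0$ and $\lambda_1,\dots,\lambda_n,\lambda^*_1,\dots,\lambda^*_n>0$. Let $X_1,\dots,X_n$ be independent with $X_i\sim\mathrm{GE}(\alpha,\lambda_i)$ and $X^*_1,\dots,X^*_n$ independent with $X^*_i\sim\mathrm{GE}(\alpha,\lambda^*_i)$. (a) If $0<\alpha\le1$ and $\sum_{i=1}^{j}\lambda^*_{(i)}\ge\sum_{i=1}^{j}\lambda_{(i)}$ for all $j=1,\dots,n$, then $X_{1:n}\ge_{\rm st}X^*_{1:n}$. (b) If $\alpha\ge1$ and $\sum_{i=j}^{n}\lambda^*_{(i)}\le\sum_{i=j}^{n}\lambda_{(i)}$ for all $j=1,\dots,n$, then $X_{1:n}\le_{\rm st}X^*_{1:n}$.
   Context: $X\sim\mathrm{GE}(\alpha,\lambda)$ means $X$ has distribution function $(1-e^{-\lambda x})^{\alpha}$, $x>0$. $X_{1:n}=\min_i X_i$. $\lambda_{(1)}\le\dots\le\lambda_{(n)}$ are the components in increasing order. $X\le_{\rm st}Y$ means $P(X>x)\le P(Y>x)$ for all $x$. *)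

From HB Require Import structures.
From mathcomp Require Import all_boot all_order all_algebra.
From mathcomp Require Import all_classical all_reals all_analysis.
Set Implicit Arguments. Unset Strict Implicit. Unset Printing Implicit Defensive.
Import Order.TTheory GRing.Theory Num.Theory.
Local Open Scope classical_set_scope.
Local Open Scope ring_scope.

Definition GE_cdf {R : realType} (alpha lam x : R) : R :=
  if 0 < x then (1 - expR (- (lam * x))) `^ alpha else 0.

Definition has_GE_dist {R : realType} {d} {T : measurableType d}
  (P : probability T R) (X : T -> R) (alpha lam : R) : Prop :=
  forall x : R, P (X @^-1` `]-oo, x]) = (GE_cdf alpha lam x)%:E.

Definition mutually_independent {R : realType} {d} {T : measurableType d} {n : nat}
  (P : probability T R) (X : 'I_n -> T -> R) : Prop :=
  forall (J : {set 'I_n}) (B : 'I_n -> set R),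
    (forall i, measurable (B i)) ->
    P (\bigcap_(i in [set i | i \in J]) (X i @^-1` B i)) =
    (\prod_(i in J) P (X i @^-1` B i))%E.

(* X_{1:n} = min_i X_i (as an extended real; equals a real value when n >= 1). *)
Definition min_rv {R : realType} {T : Type} {n : nat} (X : 'I_n -> T -> R) (t : T)
  : \bar R := (\big[mine/+oo]_(i < n) (X i t)%:E)%E.

Definition survival {R : realType} {d} {T : measurableType d}
  (P : probability T R) (Y : T -> \bar R) (x : R) : \bar R :=
  P [set t | (x%:E < Y t)%E].

Definition st_le {R : realType} {d1 d2} {T1 : measurableType d1} {T2 : measurableType d2}
  (P1 : probability T1 R) (Y1 : T1 -> \bar R) (P2 : probability T2 R) (Y2 : T2 -> \bar R)
  : Prop := forall x : R, (survival P1 Y1 x <= survival P2 Y2 x)%E.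

(* Increasing rearrangement lambda_(1) <= ... <= lambda_(n), 0-indexed. *)
Definition sorted_vec {R : realType} {n : nat} (lam : 'I_n -> R) : seq R :=
  sort <=%R [seq lam i | i <- enum 'I_n].

Definition ord_stat {R : realType} {n : nat} (lam : 'I_n -> R) (i : nat) : R :=
  nth 0 (sorted_vec lam) i.

From mathcomp Require Import all_boot all_order all_algebra.
From mathcomp Require Import all_classical all_reals all_analysis.
From mathcomp Require Import ring lra zify.
Import Order.TTheory GRing.Theory Num.Theory.
Import numFieldNormedType.Exports.
Local Open Scope classical_set_scope.
Local Open Scope ring_scope.

(* With F_i the GE(alpha, lambda_i) distribution function, P(X_{1:n} > x) is
   prod_i (1 - F_i(x)) = exp (sum_i phi(lambda_(i) x)) for x > 0, where
   phi(t) = ln (1 - (1 - e^{-t})^alpha).  Writing u = 1 - e^{-t}, one finds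
   phi'(t) = alpha / (s(u) - 1) with s(u) = (1 - u^(1-alpha)) / (1 - u) the slope
   of the chord of v |-> v^(1-alpha) from u to 1.  This power is concave for
   alpha <= 1 and convex for alpha >= 1, so phi is decreasing and convex,
   resp. concave.  Comparing phi with its tangents at the lambda*_(i) and summing
   by parts (the Tomic-Weyl argument) turns the partial-sum hypotheses into the
   required inequality between the two sums of phi. *)

Section Convexity.
Context {R : realType}.
Implicit Types (f df : R -> R) (a b p w y z : R).

Definition tangents_below f df :=
  forall a b, 0 < a -> 0 < b -> f b + df b * (a - b) <= f a.

Lemma tangents_below_of_derive f df :
  (forall y : R, 0 < y -> is_derive y 1 f (df y)) ->
  (forall y z : R, 0 < y -> y <= z -> df y <= df z) ->
  tangents_below f df.
Proof.
move=> f_df df_nondecr a b a_gt0 b_gt0.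
have cont (c d : R) : 0 < c -> {within `[c, d], continuous f}.
  move=> c_gt0; apply: derivable_within_continuous => y.
  rewrite in_itv /= => /andP[cy _].
  by have [] := f_df y (lt_le_trans c_gt0 cy).
have der (c d : R) : 0 < c -> forall y : R, y \in `]c, d[ -> is_derive y 1 f (df y).
  by move=> c_gt0 y; rewrite in_itv /= => /andP[cy _]; apply/f_df/(lt_trans c_gt0).
case: (ltgtP a b) => [ab|ba|->]; last by rewrite subrr mulr0 addr0.
- have [c] := MVT ab (der _ _ a_gt0) (cont _ _ a_gt0).
  rewrite in_itv /= => /andP[ac cb] mvt.
  have : df c <= df b by apply: df_nondecr; [apply: lt_trans ac | apply: ltW].
  have : 0 <= b - a by rewrite subr_ge0 ltW.
  nra.
- have [c] := MVT ba (der _ _ b_gt0) (cont _ _ b_gt0).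
  rewrite in_itv /= => /andP[bc ca] mvt.
  have : df b <= df c by apply: df_nondecr; [|apply: ltW].
  have : 0 <= a - b by rewrite subr_ge0 ltW.
  nra.
Qed.

Lemma chord_slope_nondecr f df u1 u2 w :
  tangents_below f df -> 0 < u1 -> u1 <= u2 -> u2 < w ->
  (f w - f u1) / (w - u1) <= (f w - f u2) / (w - u2).
Proof.
move=> tf u1_gt0 u12 u2w.
have u2_gt0 := lt_le_trans u1_gt0 u12; have w_gt0 := lt_trans u2_gt0 u2w.
have := tf u1 u2 u1_gt0 u2_gt0; have := tf w u2 w_gt0 u2_gt0.
rewrite ler_pdivrMr ?subr_gt0 ?(le_lt_trans u12) // mulrAC ler_pdivlMr ?subr_gt0 //.
move=> tw tu1.
have h1 : 0 <= (df u2 * (u2 - u1) - (f u2 - f u1)) * (w - u2).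
  by apply: mulr_ge0; lra.
have h2 : 0 <= (f w - f u2 - df u2 * (w - u2)) * (u2 - u1).
  by apply: mulr_ge0; lra.
nra.
Qed.

Lemma powR_expR a p : 0 < a -> a `^ p = expR (p * ln a).
Proof. by move=> a_gt0; rewrite /powR gt_eqF. Qed.

Lemma powR_nonincr p y z : p <= 0 -> 0 < y -> y <= z -> z `^ p <= y `^ p.
Proof.
move=> p_le0 y_gt0 yz; rewrite !powR_expR ?(lt_le_trans y_gt0) //.
by rewrite ler_expR ler_wnM2l // ler_ln // posrE (lt_le_trans y_gt0).
Qed.

Lemma tangents_below_powR p : p <= 0 ->
  tangents_below (fun v : R => v `^ p) (fun v => p * v `^ (p - 1)).
Proof.
move=> p_le0; apply: tangents_below_of_derive => y z y_gt0 yz.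
by apply: ler_wnM2l => //; apply: powR_nonincr => //; lra.
Qed.

Lemma tangents_below_opp_powR p : 0 <= p <= 1 ->
  tangents_below (fun v => - v `^ p) (fun v => - (p * v `^ (p - 1))).
Proof.
move=> /andP[p_ge0 p_le1].
apply: tangents_below_of_derive => [y y_gt0|y z y_gt0 yz].
  exact/is_deriveN/is_derive1_powR.
by rewrite lerN2; apply: ler_wpM2l => //; apply: powR_nonincr => //; lra.
Qed.

End Convexity.

Section PowerChord.
Context {R : realType}.
Implicit Types p u : R.

Definition pow_chord_to_one p u := (1 - u `^ p) / (1 - u).

Lemma powR_lt1 p u : 0 < p -> 0 < u < 1 -> u `^ p < 1.
Proof.
by move=> p_gt0 /andP[u_gt0 u_lt1]; rewrite powR_expR // expR_lt1 pmulr_rlt0 // ln_lt0 ?u_gt0.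
Qed.

Lemma powR_gt_base p u : p < 1 -> 0 < u < 1 -> u < u `^ p.
Proof.
move=> p_lt1 /andP[u_gt0 u_lt1]; rewrite powR_expR // -{1}(lnK u_gt0) ltr_expR.
have : ln u < 0 by rewrite ln_lt0 ?u_gt0.
nra.
Qed.

Lemma pow_chord_to_one_lt1 p u : p < 1 -> 0 < u < 1 -> pow_chord_to_one p u < 1.
Proof.
move=> p_lt1 u01; have /andP[_ u_lt1] := u01.
by rewrite /pow_chord_to_one ltr_pdivrMr ?subr_gt0 // mul1r ltrD2l ltrN2 powR_gt_base.
Qed.

Lemma pow_chord_to_one_nondecr p u1 u2 : p <= 0 -> 0 < u1 -> u1 <= u2 -> u2 < 1 ->
  pow_chord_to_one p u1 <= pow_chord_to_one p u2.
Proof.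
move=> p_le0 u1_gt0 u12 u2_lt1.
have := chord_slope_nondecr _ _ _ _ _ (tangents_below_powR _ p_le0) u1_gt0 u12 u2_lt1.
by rewrite powR1.
Qed.

Lemma pow_chord_to_one_nonincr p u1 u2 : 0 <= p <= 1 -> 0 < u1 -> u1 <= u2 -> u2 < 1 ->
  pow_chord_to_one p u2 <= pow_chord_to_one p u1.
Proof.
move=> p01 u1_gt0 u12 u2_lt1.
have := chord_slope_nondecr _ _ _ _ _ (tangents_below_opp_powR _ p01) u1_gt0 u12 u2_lt1.
have opp_chord u : (-1 - - u `^ p) / (1 - u) = - pow_chord_to_one p u.
  by rewrite -mulNr opprB opprK addrC.
by rewrite powR1 !opp_chord lerN2.
Qed.

End PowerChord.

Section GELogSurvival.
Context {R : realType}.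
Implicit Types al s t : R.

Definition exp_cdf t := 1 - expR (- t).

(* ln P(X > x) for X ~ GE(al, lambda), as a function of t = lambda * x > 0 *)
Definition GE_log_surv al t := ln (1 - exp_cdf t `^ al).

Definition GE_log_surv' al t := al / (pow_chord_to_one (1 - al) (exp_cdf t) - 1).

Lemma exp_cdf_gt0 t : 0 < t -> 0 < exp_cdf t.
Proof. by move=> t_gt0; rewrite subr_gt0 expR_lt1 oppr_lt0. Qed.

Lemma exp_cdf_lt1 t : exp_cdf t < 1.
Proof. by rewrite ltrBlDr ltrDl expR_gt0. Qed.

Lemma exp_cdf_nondecr s t : s <= t -> exp_cdf s <= exp_cdf t.
Proof. by move=> st; rewrite lerD2l lerN2 ler_expR lerN2. Qed.

Lemma is_derive_exp_cdf t : is_derive t 1 exp_cdf (expR (- t)).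
Proof.
have e_der : is_derive t 1 (expR \o -%R) (expR (- t) * -1).
  exact: is_derive1_comp (is_derive_expR _) (is_deriveNid _ _).
have -> : exp_cdf = cst 1 - (expR \o -%R) by apply/funext.
apply: is_derive_eq (is_deriveB (is_derive_cst (1 : R) t 1) e_der) _.
by rewrite mulrN1 opprK add0r.
Qed.

Variable al : R.
Hypothesis al_gt0 : 0 < al.

Lemma is_derive_GE_log_surv t : 0 < t ->
  is_derive t 1 (GE_log_surv al) (GE_log_surv' al t).
Proof.
move=> t_gt0; have u_gt0 := exp_cdf_gt0 t t_gt0; have u_lt1 := exp_cdf_lt1 t.
have ua_lt1 : exp_cdf t `^ al < 1 by apply: powR_lt1; [|rewrite u_gt0].
have ua_der := is_derive1_comp (is_derive1_powR al u_gt0) (is_derive_exp_cdf t).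
have surv_der := is_deriveB (is_derive_cst (1 : R) t 1) ua_der.
have surv_gt0 : 0 < 1 - exp_cdf t `^ al by rewrite subr_gt0.
have -> : GE_log_surv al = (@ln R) \o (cst 1 - ((@powR R)^~ al \o exp_cdf)).
  by apply/funext.
have := is_derive1_comp (g := cst 1 - ((@powR R)^~ al \o exp_cdf))
  (is_derive1_ln surv_gt0) surv_der.
move=> /is_derive_eq; apply.
have w_gt0 : 0 < exp_cdf t `^ (1 - al) by apply: powR_gt0.
have uw : exp_cdf t < exp_cdf t `^ (1 - al).
  apply: powR_gt_base; last by rewrite u_gt0.
  by rewrite ltrBlDl ltrDr.
have -> : expR (- t) = 1 - exp_cdf t by rewrite /exp_cdf; ring.
(* with w = u^(1-al): u^al = u / w and u^(al-1) = 1 / w *)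
rewrite -(mulr_powRB1 (ltW u_gt0) al_gt0) -[al - 1]opprB powRN.
rewrite /GE_log_surv' /pow_chord_to_one.
set u := exp_cdf t in u_gt0 u_lt1 uw w_gt0 *; set w := u `^ (1 - al) in uw w_gt0 *.
field; apply/and4P; split; apply/negP => /eqP; lra.
Qed.

Lemma GE_log_surv'_denom_lt0 t : 0 < t ->
  pow_chord_to_one (1 - al) (exp_cdf t) - 1 < 0.
Proof.
move=> t_gt0; rewrite subr_lt0 pow_chord_to_one_lt1 ?exp_cdf_gt0 ?exp_cdf_lt1 //.
by rewrite ltrBlDl ltrDr.
Qed.

Lemma GE_log_surv'_le0 t : 0 < t -> GE_log_surv' al t <= 0.
Proof.
move=> t_gt0; rewrite pmulr_rle0 // invr_le0 ltW //.
exact: GE_log_surv'_denom_lt0.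
Qed.

Lemma GE_log_surv'_nondecr s t : al <= 1 -> 0 < s -> s <= t ->
  GE_log_surv' al s <= GE_log_surv' al t.
Proof.
move=> al_le1 s_gt0 st; have t_gt0 := lt_le_trans s_gt0 st.
rewrite ler_pM2l // lef_nV2 ?negrE ?GE_log_surv'_denom_lt0 // lerD2r.
apply: pow_chord_to_one_nonincr; rewrite ?exp_cdf_nondecr ?exp_cdf_gt0 ?exp_cdf_lt1 //.
by rewrite subr_ge0 al_le1 lerBlDr lerDl ltW.
Qed.

Lemma GE_log_surv'_nonincr s t : 1 <= al -> 0 < s -> s <= t ->
  GE_log_surv' al t <= GE_log_surv' al s.
Proof.
move=> al_ge1 s_gt0 st; have t_gt0 := lt_le_trans s_gt0 st.
rewrite ler_pM2l // lef_nV2 ?negrE ?GE_log_surv'_denom_lt0 // lerD2r.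
by apply: pow_chord_to_one_nondecr; rewrite ?exp_cdf_nondecr ?exp_cdf_gt0 ?exp_cdf_lt1 ?subr_le0.
Qed.

Lemma tangents_below_GE_log_surv : al <= 1 ->
  tangents_below (GE_log_surv al) (GE_log_surv' al).
Proof.
move=> al_le1; apply: tangents_below_of_derive => [|s t s_gt0 st].
  exact: is_derive_GE_log_surv.
exact: GE_log_surv'_nondecr.
Qed.

Lemma tangents_above_GE_log_surv : 1 <= al ->
  tangents_below (fun t => - GE_log_surv al t) (fun t => - GE_log_surv' al t).
Proof.
move=> al_ge1; apply: tangents_below_of_derive => [t t_gt0|s t s_gt0 st].
  exact/is_deriveN/is_derive_GE_log_surv.
by rewrite lerN2; apply: GE_log_surv'_nonincr.
Qed.

End GELogSurvival.

Section AbelSummation.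
Context {R : numDomainType}.
Implicit Types c d : nat -> R.

Lemma sum_mul_nondecr_le0 N c d :
  (forall i j, (i <= j < N)%N -> c i <= c j) ->
  (forall i, (i < N)%N -> c i <= 0) ->
  (forall j, (1 <= j <= N)%N -> 0 <= \sum_(0 <= i < j) d i) ->
  \sum_(0 <= i < N) c i * d i <= 0.
Proof.
move=> c_nondecr c_le0 d_prefix.
have abel k m : (k <= m.+1)%N -> (m < N)%N ->
    \sum_(0 <= i < k) c i * d i <= c m * \sum_(0 <= i < k) d i.
  elim: k m => [|k IHk] m km mN; first by rewrite !big_geq // mulr0.
  rewrite !big_nat_recr //=.
  apply: le_trans (lerD (IHk k _ _) (lexx _)) _; [lia | lia |].
  rewrite -mulrDr -big_nat_recr //.
  by apply: ler_wpM2r; [apply: d_prefix | apply: c_nondecr]; lia.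
case: N c_nondecr c_le0 d_prefix abel => [|N] c_nondecr c_le0 d_prefix abel.
  by rewrite big_geq.
apply: le_trans (abel N.+1 N (leqnn _) (ltnSn _)) _.
by apply: mulr_le0_ge0; [apply: c_le0 | apply: d_prefix]; lia.
Qed.

Lemma sum_mul_nonincr_le0 N c d :
  (forall i j, (i <= j < N)%N -> c j <= c i) ->
  (forall i, (i < N)%N -> c i <= 0) ->
  (forall j, (j < N)%N -> 0 <= \sum_(j <= i < N) d i) ->
  \sum_(0 <= i < N) c i * d i <= 0.
Proof.
move=> c_nonincr c_le0 d_suffix.
rewrite big_nat_rev /= add0n.
apply: sum_mul_nondecr_le0 => [i j ij|i iN|j jN].
- by apply: c_nonincr; lia.
- by apply: c_le0; lia.
have -> : \sum_(0 <= i < j) d (N - i.+1)%N = \sum_(N - j <= i < N) d i.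
  rewrite -[(N - j)%N]add0n big_addn (_ : N - (N - j) = j)%N; last by lia.
  by rewrite big_nat_rev add0n; apply: eq_big_nat => i ij; congr d; lia.
by apply: d_suffix; lia.
Qed.

End AbelSummation.

Section Majorization.
Context {R : realType}.
Variables (N : nat) (a b : nat -> R) (f df : R -> R).
Hypothesis df_le0 : forall y, 0 < y -> df y <= 0.
Hypothesis a_gt0 : forall i, (i < N)%N -> 0 < a i.
Hypothesis b_gt0 : forall i, (i < N)%N -> 0 < b i.
Hypothesis b_nondecr : forall i j, (i <= j < N)%N -> b i <= b j.

Lemma weak_supermajorization_sum_le :
  tangents_below f df ->
  (forall y z, 0 < y -> y <= z -> df y <= df z) ->
  (forall j, (1 <= j <= N)%N -> \sum_(0 <= i < j) a i <= \sum_(0 <= i < j) b i) ->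
  \sum_(0 <= i < N) f (b i) <= \sum_(0 <= i < N) f (a i).
Proof.
move=> f_tangents df_nondecr ab_prefix.
have abel : \sum_(0 <= i < N) df (b i) * (b i - a i) <= 0.
  apply: sum_mul_nondecr_le0 => [i j /andP[ij jN]|i iN|j jN].
  - by apply: df_nondecr; [apply: b_gt0; lia | apply: b_nondecr; lia].
  - exact/df_le0/b_gt0.
  - by rewrite sumrB subr_ge0 ab_prefix.
rewrite -subr_le0 -sumrB; apply: le_trans abel.
rewrite big_nat_cond [leRHS]big_nat_cond; apply: ler_sum => i /andP[/andP[_ iN] _].
by have := f_tangents _ _ (a_gt0 i iN) (b_gt0 i iN); lra.
Qed.

Lemma weak_submajorization_sum_le :
  tangents_below (fun y => - f y) (fun y => - df y) ->
  (forall y z, 0 < y -> y <= z -> df z <= df y) ->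
  (forall j, (j < N)%N -> \sum_(j <= i < N) b i <= \sum_(j <= i < N) a i) ->
  \sum_(0 <= i < N) f (a i) <= \sum_(0 <= i < N) f (b i).
Proof.
move=> f_tangents df_nonincr ab_suffix.
have abel : \sum_(0 <= i < N) df (b i) * (a i - b i) <= 0.
  apply: sum_mul_nonincr_le0 => [i j /andP[ij jN]|i iN|j jN].
  - by apply: df_nonincr; [apply: b_gt0; lia | apply: b_nondecr; lia].
  - exact/df_le0/b_gt0.
  - by rewrite sumrB subr_ge0 ab_suffix.
rewrite -subr_le0 -sumrB; apply: le_trans abel.
rewrite big_nat_cond [leRHS]big_nat_cond; apply: ler_sum => i /andP[/andP[_ iN] _].
by have := f_tangents _ _ (a_gt0 i iN) (b_gt0 i iN); lra.
Qed.

End Majorization.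

Section MinSurvival.
Context {R : realType} {d : measure_display} {T : measurableType d}.
Variables (P : probability T R) (n : nat) (X : 'I_n -> T -> R) (F : 'I_n -> R -> R).
Hypothesis mX : forall i, measurable_fun setT (X i).
Hypothesis X_indep : mutually_independent P X.
Hypothesis X_cdf : forall i x, P (X i @^-1` `]-oo, x]) = (F i x)%:E.

Lemma min_rv_gt_bigcap x :
  [set t | (x%:E < min_rv X t)%E] = \bigcap_(i in [set: 'I_n]) (X i @^-1` `]x, +oo[).
Proof.
apply/seteqP; split => t /=.
- move=> x_lt_min i _ /=; rewrite in_itv /= andbT -lte_fin.
  by apply: lt_le_trans x_lt_min _; exact: bigmin_le.
- move=> x_lt_X; apply: lt_bigmin => [|i _]; first exact: ltry.
  by have := x_lt_X i I; rewrite /= in_itv /= andbT lte_fin.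
Qed.

Lemma survival_min_prod x : survival P (min_rv X) x = (\prod_(i < n) (1 - F i x))%:E.
Proof.
have := X_indep [set: 'I_n]%SET (fun=> `]x, +oo[%classic) (fun=> measurable_itv _).
rewrite (_ : [set i | i \in [set: 'I_n]%SET] = [set: 'I_n]); last first.
  by apply/seteqP; split => i //= _; rewrite finset.in_setT.
rewrite /survival min_rv_gt_bigcap => ->; rewrite -prodEFin.
rewrite (eq_bigl xpredT) => [|i]; last by rewrite finset.in_setT.
apply: eq_bigr => i _.
have -> : X i @^-1` `]x, +oo[ = ~` (X i @^-1` `]-oo, x]).
  by apply/seteqP; split => t /=; rewrite !in_itv /= andbT ltNge => /negP.
rewrite probability_setC ?X_cdf //.
by rewrite -[X in measurable X]setTI; apply: mX => //; exact: measurable_itv.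
Qed.

End MinSurvival.

Section OrderStatistics.
Context {R : realType} {n : nat}.
Implicit Types lam : 'I_n -> R.

Lemma size_sorted_vec lam : size (sorted_vec lam) = n.
Proof. by rewrite size_sort size_map size_enum_ord. Qed.

Lemma sum_ord_stat lam (g : R -> R) :
  \sum_(i < n) g (lam i) = \sum_(0 <= k < n) g (ord_stat lam k).
Proof.
transitivity (\sum_(y <- sorted_vec lam) g y).
  by rewrite (perm_big _ (permEl (perm_sort _ _))) big_map big_enum.
by rewrite (big_nth 0) size_sorted_vec.
Qed.

Lemma ord_stat_gt0 lam k : (forall i, 0 < lam i) -> (k < n)%N -> 0 < ord_stat lam k.
Proof.
move=> lam_gt0 kn; have : ord_stat lam k \in sorted_vec lam.
  by apply: mem_nth; rewrite size_sorted_vec.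
by rewrite mem_sort => /mapP[i _ ->].
Qed.

Lemma ord_stat_nondecr lam i j : (i <= j < n)%N -> ord_stat lam i <= ord_stat lam j.
Proof.
move=> /andP[ij jn]; apply: (le_sorted_leq_nth 0 (sort_sorted (@le_total _ R) _));
by rewrite ?inE ?size_sorted_vec // (leq_ltn_trans ij).
Qed.

End OrderStatistics.

Section GESurvival.
Context {R : realType} {n : nat}.
Variables (al x : R) (lam lams : 'I_n -> R).
Hypothesis al_gt0 : 0 < al.
Hypothesis lam_gt0 : forall i, 0 < lam i.
Hypothesis lams_gt0 : forall i, 0 < lams i.

Lemma GE_survival_prod_nonpos (mu : 'I_n -> R) : x <= 0 ->
  \prod_(i < n) (1 - GE_cdf al (mu i) x) = 1.
Proof. by move=> x_le0; apply: big1 => i _; rewrite /GE_cdf ltNge x_le0 subr0. Qed.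

Lemma GE_survival_prod_expR (mu : 'I_n -> R) : 0 < x -> (forall i, 0 < mu i) ->
  \prod_(i < n) (1 - GE_cdf al (mu i) x) =
  expR (\sum_(0 <= k < n) GE_log_surv al (ord_stat mu k * x)).
Proof.
move=> x_gt0 mu_gt0.
rewrite -(sum_ord_stat mu (fun l => GE_log_surv al (l * x))) expR_sum.
apply: eq_bigr => i _.
have u_gt0 : 0 < exp_cdf (mu i * x) by rewrite exp_cdf_gt0 ?mulr_gt0.
have ua_lt1 : exp_cdf (mu i * x) `^ al < 1 by rewrite powR_lt1 ?u_gt0 ?exp_cdf_lt1.
rewrite /GE_log_surv lnK ?posrE ?subr_gt0 //.
by rewrite /GE_cdf x_gt0 /exp_cdf.
Qed.

Lemma GE_survival_prod_le_supmaj : al <= 1 ->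
  (forall j, (1 <= j <= n)%N ->
     \sum_(0 <= i < j) ord_stat lam i <= \sum_(0 <= i < j) ord_stat lams i) ->
  \prod_(i < n) (1 - GE_cdf al (lams i) x) <= \prod_(i < n) (1 - GE_cdf al (lam i) x).
Proof.
move=> al_le1 prefix; have [x_le0|x_gt0] := leP x 0.
  by rewrite [leLHS]GE_survival_prod_nonpos // [leRHS]GE_survival_prod_nonpos.
rewrite [leLHS](GE_survival_prod_expR lams x_gt0 lams_gt0).
rewrite [leRHS](GE_survival_prod_expR lam x_gt0 lam_gt0) ler_expR.
apply: (weak_supermajorization_sum_le _ _ _ _ (GE_log_surv' al)) => [t|i iN|i iN|i j ijn||y z|j jn].
- exact: GE_log_surv'_le0.
- by rewrite mulr_gt0 ?ord_stat_gt0.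
- by rewrite mulr_gt0 ?ord_stat_gt0.
- by rewrite ler_pM2r ?ord_stat_nondecr.
- exact: tangents_below_GE_log_surv.
- exact: GE_log_surv'_nondecr.
- by rewrite -!mulr_suml ler_pM2r ?prefix.
Qed.

Lemma GE_survival_prod_le_submaj : 1 <= al ->
  (forall j, (1 <= j <= n)%N ->
     \sum_(j.-1 <= i < n) ord_stat lams i <= \sum_(j.-1 <= i < n) ord_stat lam i) ->
  \prod_(i < n) (1 - GE_cdf al (lam i) x) <= \prod_(i < n) (1 - GE_cdf al (lams i) x).
Proof.
move=> al_ge1 suffix; have [x_le0|x_gt0] := leP x 0.
  by rewrite [leLHS]GE_survival_prod_nonpos // [leRHS]GE_survival_prod_nonpos.
rewrite [leLHS](GE_survival_prod_expR lam x_gt0 lam_gt0).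
rewrite [leRHS](GE_survival_prod_expR lams x_gt0 lams_gt0) ler_expR.
apply: (weak_submajorization_sum_le _ _ _ _ (GE_log_surv' al)) => [t|i iN|i iN|i j ijn||y z|j jn].
- exact: GE_log_surv'_le0.
- by rewrite mulr_gt0 ?ord_stat_gt0.
- by rewrite mulr_gt0 ?ord_stat_gt0.
- by rewrite ler_pM2r ?ord_stat_nondecr.
- exact: tangents_above_GE_log_surv.
- exact: GE_log_surv'_nonincr.
- by rewrite -!mulr_suml ler_pM2r // (suffix j.+1).
Qed.

End GESurvival.

Theorem mainTheorem12 (R : realType) (n : nat)
  (d1 : measure_display) (T1 : measurableType d1) (P1 : probability T1 R)
  (d2 : measure_display) (T2 : measurableType d2) (P2 : probability T2 R)
  (alpha : R) (lam lams : 'I_n -> R)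
  (X : 'I_n -> T1 -> R) (Xs : 'I_n -> T2 -> R) :
  (0 < n)%N ->
  0 < alpha ->
  (forall i, 0 < lam i) -> (forall i, 0 < lams i) ->
  (forall i, measurable_fun setT (X i)) -> (forall i, measurable_fun setT (Xs i)) ->
  mutually_independent P1 X -> mutually_independent P2 Xs ->
  (forall i, has_GE_dist P1 (X i) alpha (lam i)) ->
  (forall i, has_GE_dist P2 (Xs i) alpha (lams i)) ->
  ((alpha <= 1 ->
     (forall j : nat, (1 <= j <= n)%N ->
        \sum_(0 <= i < j) ord_stat lams i >= \sum_(0 <= i < j) ord_stat lam i) ->
     st_le P2 (min_rv Xs) P1 (min_rv X))
  /\
   (1 <= alpha ->
     (forall j : nat, (1 <= j <= n)%N ->
        \sum_(j.-1 <= i < n) ord_stat lams i <= \sum_(j.-1 <= i < n) ord_stat lam i) ->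
     st_le P1 (min_rv X) P2 (min_rv Xs))).
Proof.
move=> _ al_gt0 lam_gt0 lams_gt0 mX mXs X_indep Xs_indep X_GE Xs_GE.
have surv_X x : survival P1 (min_rv X) x = (\prod_(i < n) (1 - GE_cdf alpha (lam i) x))%:E.
  exact: (survival_min_prod _ _ _ _ mX X_indep X_GE).
have surv_Xs x : survival P2 (min_rv Xs) x = (\prod_(i < n) (1 - GE_cdf alpha (lams i) x))%:E.
  exact: (survival_min_prod _ _ _ _ mXs Xs_indep Xs_GE).
split=> [al_le1 prefix | al_ge1 suffix] x; rewrite surv_X surv_Xs lee_fin.
- exact: GE_survival_prod_le_supmaj.
- exact: GE_survival_prod_le_submaj.
Qed.
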